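(* For every $M\in\Lambda^{\mathrm{rb}}$, at most one reduction sequence starts from $M$. Here a reduction sequence from $M$ means a maximal sequence $M\equiv M_0\to M_1\to M_2\to\cdots$, which is either infinite or ends in a term having no $\to$-reduct.
   Context: **$\lambda$-terms and contexts.** $\Lambda$ is the set of untyped $\lambda$-terms (up to $\alpha$-equivalence). A context $C[\,]$ is a $\lambda$-term with exactly one hole $[\,]$. $C[M]$ is the result of filling the hole with $M$; binders of $C$ may capture free variables of $M$. We write $M\,\vec N$ for $M\,N_1\cdots N_n$ (left-associated), where $n\ge 0$. **Atoms and $\Lambda^\bullet$.** For each $M\in\Lambda$ there is a new formal symbol $\underline{M}$, called an atom. Atoms are constants: they have no free variables, and substitution leaves them unchanged. For $M\in\Lambda$, $M^\bullet$ replaces each free occurrence of each variable $x$ in $M$ by the atom $\underline{x}$. Set $\Lambda^\bullet=\{M^\bullet: M\in\Lambda\}$, with substitution extended to these terms by treating atoms as constants. **The set $\Lambda^{\mathrm{rb}}$.** It is the least set such that: 1. $\underline{M}\in\Lambda^{\mathrm{rb}}$ for all $M\in\Lambda$; 2. $\langle C[\,],M\rangle\in\Lambda^{\mathrm{rb}}$ for every context $C[\,]$ and every $M\in\Lambda^\bullet$; 3. $\langle C[\,],M\,\vec N\rangle\in\Lambda^{\mathrm{rb}}$ for every context $C[\,]$, every $M\in\Lambda^{\mathrm{rb}}$ and all $N_1,\dots,N_n\in\Lambda^\bullet$. **The relation $\to$ on $\Lambda^{\mathrm{rb}}$.** It is the least relation satisfying: - (R1) $\langle C[\,],\underline{M}\rangle\to\underline{C[M]}$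 for $M\in\Lambda$; - (R2) $\langle C[\,],\lambda x.M\rangle\to\langle C[\lambda x.[\,]],M[x:=\underline{x}]\rangle$ for $\lambda x.M\in\Lambda^\bullet$; - (R3) $\langle C[\,],\underline{M}\,N_0\,\vec N\rangle\to\langle C[\,],\langle M\,[\,],N_0\rangle\,\vec N\rangle$ for $M\in\Lambda$ and $N_0,\vec N\in\Lambda^\bullet$; - (R4) $\langle C[\,],(\lambda x.M)\,N_0\,\vec N\rangle\to\langle C[\,],M[x:=N_0]\,\vec N\rangle$ for $\lambda x.M,N_0,\vec N\in\Lambda^\bullet$; - (R5) if $M\to M'$ with $M,M'\in\Lambda^{\mathrm{rb}}$, then $\langle C[\,],M\,\vec N\rangle\to\langle C[\,],M'\,\vec N\rangle$ for every context $C[\,]$ and $\vec N\in\Lambda^\bullet$. *)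

From Stdlib Require Import Arith List.
Import ListNotations.

(** Untyped lambda-terms Lambda, up to alpha-equivalence (de Bruijn indices). *)
Inductive tm : Type :=
| var (n : nat)
| lam (t : tm)
| app (t u : tm).

(** Contexts with exactly one hole. Filling is literal plugging, so binders of
    the context capture the (de Bruijn) free variables of the plugged term. *)
Inductive ctx : Type :=
| Hole
| CLam (C : ctx)
| CAppL (C : ctx) (u : tm)
| CAppR (t : tm) (C : ctx).

Fixpoint plug (C : ctx) (M : tm) : tm :=
  match C with
  | Hole => M
  | CLam C => lam (plug C M)
  | CAppL C u => app (plug C M) u
  | CAppR t C => app t (plug C M)
  end.

Fixpoint ccomp (C D : ctx) : ctx :=
  match C with
  | Hole => D
  | CLam C => CLam (ccomp C D)
  | CAppL C u => CAppL (ccomp C D) u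
  | CAppR t C => CAppR t (ccomp C D)
  end.

Fixpoint lift (c : nat) (t : tm) : tm :=
  match t with
  | var n => if n <? c then var n else var (S n)
  | lam t => lam (lift (S c) t)
  | app t u => app (lift c t) (lift c u)
  end.

(** Mixed syntax containing Lambda^bullet and Lambda^rb:
    Bv = bound variable (de Bruijn), At M = atom underline(M) (a constant),
    Pr C t = the pair < C[], t >.  Free variables of a term M are the atoms
    underline(x); an atom underline(M) inside the second component of
    <C[], _> is interpreted in the scope of the hole of C. *)
Inductive rt : Type :=
| Bv (n : nat)
| At (M : tm)
| Lm (t : rt)
| Ap (t u : rt)
| Pr (C : ctx) (t : rt).

Definition apps (t : rt) (l : list rt) : rt := fold_left Ap l t.

(** Lambda^bullet = { M^bullet | M in Lambda }: terms with no loose bound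
    variable, no pairs, and whose atoms are all of the form underline(x). *)
Fixpoint bullet_at (d : nat) (t : rt) : Prop :=
  match t with
  | Bv n => n < d
  | At M => exists i, M = var i
  | Lm t => bullet_at (S d) t
  | Ap t u => bullet_at d t /\ bullet_at d u
  | Pr _ _ => False
  end.

Definition bullet (t : rt) : Prop := bullet_at 0 t.

(** shifting atoms (used when a new binder is pushed onto the context in R2,
    i.e. the bound variable x is chosen fresh) *)
Fixpoint lift_atoms (t : rt) : rt :=
  match t with
  | Bv n => Bv n
  | At M => At (lift 0 M)
  | Lm t => Lm (lift_atoms t)
  | Ap t u => Ap (lift_atoms t) (lift_atoms u)
  | Pr C t => Pr C t
  end.

(** substitution of a closed term N for bound variable k (atoms are constants
    and left unchanged) *)
Fixpoint bsubst (k : nat) (N : rt) (t : rt) : rt :=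
  match t with
  | Bv n => if n =? k then N else if k <? n then Bv (pred n) else Bv n
  | At M => At M
  | Lm t => Lm (bsubst (S k) N t)
  | Ap t u => Ap (bsubst k N t) (bsubst k N u)
  | Pr C t => Pr C t
  end.

Inductive rb : rt -> Prop :=
| rb_atom (M : tm) : rb (At M)
| rb_pair (C : ctx) (M : rt) : bullet M -> rb (Pr C M)
| rb_app (C : ctx) (M : rt) (Ns : list rt) :
    rb M -> Forall bullet Ns -> rb (Pr C (apps M Ns)).

Inductive step : rt -> rt -> Prop :=
| R1 (C : ctx) (M : tm) :
    rb (Pr C (At M)) -> rb (At (plug C M)) ->
    step (Pr C (At M)) (At (plug C M))
| R2 (C : ctx) (M : rt) :
    bullet (Lm M) ->
    rb (Pr C (Lm M)) ->
    rb (Pr (ccomp C (CLam Hole)) (bsubst 0 (At (var 0)) (lift_atoms M))) ->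
    step (Pr C (Lm M)) (Pr (ccomp C (CLam Hole)) (bsubst 0 (At (var 0)) (lift_atoms M)))
| R3 (C : ctx) (M : tm) (N0 : rt) (Ns : list rt) :
    bullet N0 -> Forall bullet Ns ->
    rb (Pr C (apps (At M) (N0 :: Ns))) ->
    rb (Pr C (apps (Pr (CAppR M Hole) N0) Ns)) ->
    step (Pr C (apps (At M) (N0 :: Ns))) (Pr C (apps (Pr (CAppR M Hole) N0) Ns))
| R4 (C : ctx) (M N0 : rt) (Ns : list rt) :
    bullet (Lm M) -> bullet N0 -> Forall bullet Ns ->
    rb (Pr C (apps (Ap (Lm M) N0) Ns)) ->
    rb (Pr C (apps (bsubst 0 N0 M) Ns)) ->
    step (Pr C (apps (Ap (Lm M) N0) Ns)) (Pr C (apps (bsubst 0 N0 M) Ns))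
| R5 (C : ctx) (M M' : rt) (Ns : list rt) :
    step M M' -> rb M -> rb M' -> Forall bullet Ns ->
    rb (Pr C (apps M Ns)) -> rb (Pr C (apps M' Ns)) ->
    step (Pr C (apps M Ns)) (Pr C (apps M' Ns)).

(** A reduction sequence from M: a maximal sequence f 0 = M -> f 1 -> ...,
    either infinite (len = None) or of length k (len = Some k) ending in
    f k, which has no reduct.  Values f i for i > k are irrelevant. *)
Definition red_seq (M : rt) (len : option nat) (f : nat -> rt) : Prop :=
  f 0 = M /\
  match len with
  | None => forall i, step (f i) (f (S i))
  | Some k => (forall i, i < k -> step (f i) (f (S i))) /\
              (forall N, ~ step (f k) N)
  end.

Definition in_range (len : option nat) (i : nat) : Prop :=
  match len with None => True | Some k => i <= k end.

(* The relation -> is deterministic: in a pair <C[], t N1 ... Nn>, the head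
   of t (an atom, an abstraction or a pair) together with whether n = 0
   determines which of the rules R1-R5 applies, and each rule has a unique
   reduct, so the reduct is computed by a partial function.  Two maximal
   sequences from the same term therefore agree as long as both are defined,
   and neither can stop before the other, since a term that still reduces in
   one of them is not normal.  Determinism holds on all of [rt]. *)

From Stdlib Require Import List Lia.
Import ListNotations.

(* [reduct_spine C t Ns] is the reduct of <C[], apps t Ns>; descending the
   left spine of [t] pushes its arguments onto [Ns]. *)
Fixpoint reduct_spine (C : ctx) (t : rt) (Ns : list rt) : option rt :=
  match t with
  | Bv _ => None
  | At M =>
      Some (match Ns with
            | [] => At (plug C M)
            | N0 :: Ns => Pr C (apps (Pr (CAppR M Hole) N0) Ns)
            end)
  | Lm M =>
      Some (match Ns with
            | [] => Pr (ccomp C (CLam Hole)) (bsubst 0 (At (var 0)) (lift_atoms M))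
            | N0 :: Ns => Pr C (apps (bsubst 0 N0 M) Ns)
            end)
  | Ap t u => reduct_spine C t (u :: Ns)
  | Pr D t => option_map (fun M' => Pr C (apps M' Ns)) (reduct_spine D t [])
  end.

(* [reduct M = Some N] is necessary but not sufficient for [step M N]: the
   rules also demand membership in Λ^rb. *)
Definition reduct (M : rt) : option rt :=
  match M with
  | Pr C t => reduct_spine C t []
  | _ => None
  end.

Lemma reduct_spine_apps (C : ctx) (t : rt) (Ns Ns' : list rt) :
  reduct_spine C (apps t Ns) Ns' = reduct_spine C t (Ns ++ Ns').
Proof.
  revert t; induction Ns as [|N Ns IH]; intros t; [reflexivity|].
  exact (IH (Ap t N)).
Qed.

Lemma step_reduct (M N : rt) : step M N -> reduct M = Some N.
Proof.
  induction 1 as [| | | |C M M' Ns _ IH]; simpl;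
    rewrite ?reduct_spine_apps; simpl; rewrite ?app_nil_r; try reflexivity.
  destruct M as [| | | |D t]; try discriminate.
  simpl in IH |- *; now rewrite IH.
Qed.

Lemma step_deterministic (M N1 N2 : rt) : step M N1 -> step M N2 -> N1 = N2.
Proof.
  intros H1 H2; apply step_reduct in H1, H2; congruence.
Qed.

Lemma in_range_S (len : option nat) (i : nat) :
  in_range len (S i) -> in_range len i.
Proof. destruct len; simpl; lia. Qed.

Lemma red_seq_step (M : rt) (len : option nat) (f : nat -> rt) (i : nat) :
  red_seq M len f -> in_range len (S i) -> step (f i) (f (S i)).
Proof.
  intros [_ Hsteps] Hi; destruct len as [k|]; simpl in *.
  - apply (proj1 Hsteps); lia.
  - apply Hsteps.
Qed.

Lemma red_seq_agree (M : rt) (l1 l2 : option nat) (f1 f2 : nat -> rt) (i : nat) :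
  red_seq M l1 f1 -> red_seq M l2 f2 ->
  in_range l1 i -> in_range l2 i -> f1 i = f2 i.
Proof.
  intros H1 H2; induction i as [|i IH]; intros Hi1 Hi2.
  - now rewrite (proj1 H1), (proj1 H2).
  - apply (step_deterministic (f1 i)).
    + now apply (red_seq_step M l1).
    + rewrite IH by now apply in_range_S.
      now apply (red_seq_step M l2).
Qed.

Lemma red_seq_stops_first (M : rt) (k : nat) (l2 : option nat) (f1 f2 : nat -> rt) :
  red_seq M (Some k) f1 -> red_seq M l2 f2 -> ~ in_range l2 (S k).
Proof.
  intros H1 H2 Hk.
  apply (proj2 (proj2 H1) (f2 (S k))).
  rewrite (red_seq_agree M (Some k) l2 f1 f2 k H1 H2).
  - now apply (red_seq_step M l2).
  - simpl; lia.
  - now apply in_range_S.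
Qed.

Lemma red_seq_length_unique (M : rt) (l1 l2 : option nat) (f1 f2 : nat -> rt) :
  red_seq M l1 f1 -> red_seq M l2 f2 -> l1 = l2.
Proof.
  intros H1 H2; destruct l1 as [k1|], l2 as [k2|]; try reflexivity.
  - pose proof (red_seq_stops_first M k1 (Some k2) f1 f2 H1 H2).
    pose proof (red_seq_stops_first M k2 (Some k1) f2 f1 H2 H1).
    simpl in *; f_equal; lia.
  - now destruct (red_seq_stops_first M k1 None f1 f2 H1 H2).
  - now destruct (red_seq_stops_first M k2 None f2 f1 H2 H1).
Qed.

Theorem proposition5 (M : rt) :
  rb M ->
  forall (l1 : option nat) (f1 : nat -> rt) (l2 : option nat) (f2 : nat -> rt),
    red_seq M l1 f1 -> red_seq M l2 f2 ->
    l1 = l2 /\ (forall i, in_range l1 i -> f1 i = f2 i).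
Proof.
  intros _ l1 f1 l2 f2 H1 H2.
  pose proof (red_seq_length_unique M l1 l2 f1 f2 H1 H2) as Hlen.
  split; [exact Hlen|].
  intros i Hi; apply (red_seq_agree M l1 l2 f1 f2 i H1 H2 Hi).
  now rewrite <- Hlen.
Qed.
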